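(* Let $\mathcal{K}$ be a 2-category. The assignment sending a monad $(X,S,m,s)$ to the relative monad $(X,1_X,S)$ with unit $s$ and extension $f\mapsto mB\cdot Sf$ (for $f\colon A\Rightarrow SB$), a 1-cell $(F,\phi)$ to $(F,F,\phi)$ and a 2-cell $p$ to $(p,p)$, defines a 2-functor $\mathbf{Mnd}(\mathcal{K}^{op})^{op}\to\mathbf{Rmd}(\mathcal{K})$ which is injective on objects, whose image on objects is exactly the relative monads $(X,I,S)$ with $X_0=X$ and $I=1_X$, and which is an isomorphism on every hom-category. Thus $\mathbf{Mnd}(\mathcal{K}^{op})^{op}$ is a full, locally full sub-2-category of $\mathbf{Rmd}(\mathcal{K})$.
   Context: Conventions: 1-cells compose by juxtaposition; vertical composition of 2-cells is written $\cdot$; whiskering by juxtaposition. $\mathbf{Mnd}(\mathcal{K}^{op})^{op}$: objects are monads $(X,S,m,s)$ in $\mathcal{K}$; a 1-cell $(X,S)\to(Y,T)$ (with $T$ having multiplication $n$ and unit $t$) is a pair $(F,\phi)$ with $F\colon X\to Y$ and $\phi\colon FS\Rightarrow TF$ such that $\phi\cdot Fs=tF$ and $\phi\cdot Fm=nF\cdot T\phi\cdot\phi S$; a 2-cell $(F,\phi)\Rightarrow(F',\phi')$ is $p\colon F\Rightarrow F'$ with $\phi'\cdot pS=Tp\cdot\phi$. Operator: given 1-cells $F\colon X\to Z$, $G\colon Y\to Z$, $F'\colon X\to Z'$, $G'\colon Y\to Z'$, an operator $(-)^\#\colon[F,G]\to[F',G']$ is a family of functions, indexed by spans $A\colon O\to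 X$, $B\colon O\to Y$, $(-)^\#_{A,B}\colon\mathcal{K}[O,Z](FA,GB)\to\mathcal{K}[O,Z'](F'A,G'B)$, with $(fP)^\#=f^\#P$, $(f\cdot F\alpha)^\#=f^\#\cdot F'\alpha$, $(G\beta\cdot f)^\#=G'\beta\cdot f^\#$ for all 1-cells $P\colon O'\to O$ and 2-cells $\alpha\colon A'\Rightarrow A$, $\beta\colon B\Rightarrow B'$. Relative monad: a relative monad $(X,I,S)$ in $\mathcal{K}$ consists of objects $X_0,X$, 1-cells $I,S\colon X_0\to X$, an operator $(-)^\dagger=(-)^\dagger_S\colon[I,S]\to[S,S]$ (extension) and a 2-cell $s\colon I\Rightarrow S$ (unit) such that for all 1-cells $A,B,C\colon O\to X_0$ and 2-cells $k\colon IA\Rightarrow SB$, $l\colon IB\Rightarrow SC$: $k^\dagger\cdot sA=k$; $(sA)^\dagger=1_{SA}$; $(l^\dagger\cdot k)^\dagger=l^\dagger\cdot k^\dagger$. $\mathbf{Rmd}(\mathcal{K})$: a relative monad morphism $(F,F_0,\phi)\colon(X,I,S)\to(Y,J,T)$ (with $I\colon X_0\to X$, $J\colon Y_0\to Y$, units $s,t$) consists of 1-cells $F\colon X\to Y$, $F_0\colon X_0\to Y_0$ with $FI=JF_0$ and a 2-cell $\phi\colon FS\Rightarrow TF_0$ such that $\phi\cdot Fs=tF_0$ and, for all $A,B\colon O\to X_0$ and $k\colon IA\Rightarrow SB$, $\phi B\cdot F(k^\dagger_S)=(\phi B\cdot Fk)^\dagger_T\cdot\phi A$. A relative monad transformation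 $(p,p_0)\colon(F,F_0,\phi)\Rightarrow(F',F'_0,\phi')$ consists of 2-cells $p\colon F\Rightarrow F'$, $p_0\colon F_0\Rightarrow F'_0$ with $Jp_0=pI$ and $\phi'\cdot pS=Tp_0\cdot\phi$. These form a 2-category $\mathbf{Rmd}(\mathcal{K})$; the composite of $(F,F_0,\phi)$ followed by $(G,G_0,\gamma)$ is $(GF,G_0F_0,\gamma F_0\cdot G\phi)$, identities are $(1_X,1_{X_0},1_S)$, 2-cells compose componentwise. Full sub-2-category: a 2-functor $J\colon\mathcal{K}\to\mathcal{L}$ exhibits a full sub-2-category if each $J_{x,y}\colon\mathcal{K}(x,y)\to\mathcal{L}(Jx,Jy)$ is an equivalence. *)

(** * Strict 2-categories.
    1-cells are typed by their source/target objects; 2-cells between 1-cells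
    x -> y form a single type [cell x y] equipped with domain/codomain
    1-cells (a "single-sorted" presentation of each hom-category). This
    avoids transport along the strict equalities of 1-cells. Composition of
    2-cells is total; the axioms only constrain composable pairs.
    [comp1 G F] is the composite "G F" (first F, then G);
    [vcomp b a] is "b . a" (first a, then b);
    [hcomp b a] is the horizontal composite "b a" (b after a). *)
Record TwoCat : Type := MkTwoCat {
  obj : Type;
  hom : obj -> obj -> Type;
  cell : obj -> obj -> Type;
  id1 : forall x, hom x x;
  comp1 : forall x y z, hom y z -> hom x y -> hom x z;
  dom2 : forall x y, cell x y -> hom x y;
  cod2 : forall x y, cell x y -> hom x y;
  id2 : forall x y, hom x y -> cell x y;
  vcomp : forall x y, cell x y -> cell x y -> cell x y;
  hcomp : forall x y z, cell y z -> cell x y -> cell x z;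
  comp1_assoc : forall x y z w (H : hom z w) (G : hom y z) (F : hom x y),
      comp1 _ _ _ H (comp1 _ _ _ G F) = comp1 _ _ _ (comp1 _ _ _ H G) F;
  comp1_idl : forall x y (F : hom x y), comp1 _ _ _ (id1 y) F = F;
  comp1_idr : forall x y (F : hom x y), comp1 _ _ _ F (id1 x) = F;
  dom2_id2 : forall x y (F : hom x y), dom2 _ _ (id2 _ _ F) = F;
  cod2_id2 : forall x y (F : hom x y), cod2 _ _ (id2 _ _ F) = F;
  dom2_vcomp : forall x y (a b : cell x y), cod2 _ _ a = dom2 _ _ b ->
      dom2 _ _ (vcomp _ _ b a) = dom2 _ _ a;
  cod2_vcomp : forall x y (a b : cell x y), cod2 _ _ a = dom2 _ _ b ->
      cod2 _ _ (vcomp _ _ b a) = cod2 _ _ b;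
  vcomp_assoc : forall x y (a b c : cell x y),
      cod2 _ _ a = dom2 _ _ b -> cod2 _ _ b = dom2 _ _ c ->
      vcomp _ _ c (vcomp _ _ b a) = vcomp _ _ (vcomp _ _ c b) a;
  vcomp_idl : forall x y (a : cell x y), vcomp _ _ (id2 _ _ (cod2 _ _ a)) a = a;
  vcomp_idr : forall x y (a : cell x y), vcomp _ _ a (id2 _ _ (dom2 _ _ a)) = a;
  dom2_hcomp : forall x y z (b : cell y z) (a : cell x y),
      dom2 _ _ (hcomp _ _ _ b a) = comp1 _ _ _ (dom2 _ _ b) (dom2 _ _ a);
  cod2_hcomp : forall x y z (b : cell y z) (a : cell x y),
      cod2 _ _ (hcomp _ _ _ b a) = comp1 _ _ _ (cod2 _ _ b) (cod2 _ _ a);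
  hcomp_assoc : forall x y z w (c : cell z w) (b : cell y z) (a : cell x y),
      hcomp _ _ _ c (hcomp _ _ _ b a) = hcomp _ _ _ (hcomp _ _ _ c b) a;
  hcomp_idl : forall x y (a : cell x y), hcomp _ _ _ (id2 _ _ (id1 y)) a = a;
  hcomp_idr : forall x y (a : cell x y), hcomp _ _ _ a (id2 _ _ (id1 x)) = a;
  hcomp_id2 : forall x y z (G : hom y z) (F : hom x y),
      hcomp _ _ _ (id2 _ _ G) (id2 _ _ F) = id2 _ _ (comp1 _ _ _ G F);
  interchange : forall x y z (a b : cell x y) (c d : cell y z),
      cod2 _ _ a = dom2 _ _ b -> cod2 _ _ c = dom2 _ _ d ->
      hcomp _ _ _ (vcomp _ _ d c) (vcomp _ _ b a)
      = vcomp _ _ (hcomp _ _ _ d b) (hcomp _ _ _ c a)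
}.

Arguments hom {t} _ _.
Arguments cell {t} _ _.
Arguments id1 {t} _.
Arguments comp1 {t x y z} _ _.
Arguments dom2 {t x y} _.
Arguments cod2 {t x y} _.
Arguments id2 {t x y} _.
Arguments vcomp {t x y} _ _.
Arguments hcomp {t x y z} _ _.

Definition wl {K : TwoCat} {x y z : obj K} (F : hom y z) (a : cell x y) : cell x z :=
  hcomp (id2 F) a.
Definition wr {K : TwoCat} {x y z : obj K} (a : cell y z) (P : hom x y) : cell x z :=
  hcomp a (id2 P).

Record MonadData (K : TwoCat) : Type := MkMonad {
  mX : obj K; mS : hom mX mX; mm : cell mX mX; ms : cell mX mX }.
Arguments mX {K} _. Arguments mS {K} _. Arguments mm {K} _. Arguments ms {K} _.

Record is_monad {K : TwoCat} (M : MonadData K) : Prop := {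
  mm_dom : dom2 (mm M) = comp1 (mS M) (mS M);
  mm_cod : cod2 (mm M) = mS M;
  ms_dom : dom2 (ms M) = id1 (mX M);
  ms_cod : cod2 (ms M) = mS M;
  m_assoc : vcomp (mm M) (wl (mS M) (mm M)) = vcomp (mm M) (wr (mm M) (mS M));
  m_unitl : vcomp (mm M) (wr (ms M) (mS M)) = id2 (mS M);
  m_unitr : vcomp (mm M) (wl (mS M) (ms M)) = id2 (mS M) }.

(** The extension operator [(-)^dagger : [I,S] -> [S,S]] takes, for every
    span A, B : O -> X0, a 2-cell k : I A => S B (the typing being supplied as
    proof arguments) to a 2-cell S A => S B. *)
Definition ext_type {K : TwoCat} {X0 X : obj K} (I S : hom X0 X) : Type :=
  forall (O : obj K) (A B : hom O X0) (k : cell O X),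
    dom2 k = comp1 I A -> cod2 k = comp1 S B -> cell O X.

Record RelMonadData (K : TwoCat) : Type := MkRelMonad {
  rX0 : obj K; rX : obj K; rI : hom rX0 rX; rS : hom rX0 rX;
  rext : ext_type rI rS; rs : cell rX0 rX }.
Arguments rX0 {K} _. Arguments rX {K} _. Arguments rI {K} _. Arguments rS {K} _.
Arguments rext {K} _ _ _ _ _ _ _. Arguments rs {K} _.

Record is_relmonad {K : TwoCat} (R : RelMonadData K) : Prop := {
  rs_dom : dom2 (rs R) = rI R;
  rs_cod : cod2 (rs R) = rS R;
  rext_dom : forall O (A B : hom O (rX0 R)) k h1 h2,
      dom2 (rext R O A B k h1 h2) = comp1 (rS R) A;
  rext_cod : forall O (A B : hom O (rX0 R)) k h1 h2,
      cod2 (rext R O A B k h1 h2) = comp1 (rS R) B;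
  rext_natP : forall O O' (P : hom O' O) (A B : hom O (rX0 R)) k h1 h2 h1' h2',
      rext R O' (comp1 A P) (comp1 B P) (wr k P) h1' h2'
      = wr (rext R O A B k h1 h2) P;
  rext_natA : forall O (A A' B : hom O (rX0 R)) k (al : cell O (rX0 R)) h1 h2,
      dom2 al = A' -> cod2 al = A -> forall h1' h2',
      rext R O A' B (vcomp k (wl (rI R) al)) h1' h2'
      = vcomp (rext R O A B k h1 h2) (wl (rS R) al);
  rext_natB : forall O (A B B' : hom O (rX0 R)) k (be : cell O (rX0 R)) h1 h2,
      dom2 be = B -> cod2 be = B' -> forall h1' h2',
      rext R O A B' (vcomp (wl (rS R) be) k) h1' h2'
      = vcomp (wl (rS R) be) (rext R O A B k h1 h2);
  rlaw_unitl : forall O (A B : hom O (rX0 R)) k h1 h2,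
      vcomp (rext R O A B k h1 h2) (wr (rs R) A) = k;
  rlaw_unitr : forall O (A : hom O (rX0 R)) h1 h2,
      rext R O A A (wr (rs R) A) h1 h2 = id2 (comp1 (rS R) A);
  rlaw_assoc : forall O (A B C : hom O (rX0 R)) k l hk1 hk2 hl1 hl2 h1 h2,
      rext R O A C (vcomp (rext R O B C l hl1 hl2) k) h1 h2
      = vcomp (rext R O B C l hl1 hl2) (rext R O A B k hk1 hk2) }.

(** * Mnd(K^op)^op : 1-cells and 2-cells. *)
Record MndMor {K : TwoCat} (M M' : MonadData K) : Type := MkMndMor {
  mF : hom (mX M) (mX M'); mphi : cell (mX M) (mX M') }.
Arguments mF {K M M'} _. Arguments mphi {K M M'} _.
Arguments MkMndMor {K M M'} _ _.

Record is_mnd_mor {K : TwoCat} {M M' : MonadData K} (u : MndMor M M') : Prop := {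
  mphi_dom : dom2 (mphi u) = comp1 (mF u) (mS M);
  mphi_cod : cod2 (mphi u) = comp1 (mS M') (mF u);
  mphi_unit : vcomp (mphi u) (wl (mF u) (ms M)) = wr (ms M') (mF u);
  mphi_mult : vcomp (mphi u) (wl (mF u) (mm M))
      = vcomp (wr (mm M') (mF u)) (vcomp (wl (mS M') (mphi u)) (wr (mphi u) (mS M))) }.

Definition is_mnd_tr {K : TwoCat} {M M' : MonadData K} (u v : MndMor M M')
    (p : cell (mX M) (mX M')) : Prop :=
  dom2 p = mF u /\ cod2 p = mF v /\
  vcomp (mphi v) (wr p (mS M)) = vcomp (wl (mS M') p) (mphi u).

Definition mnd_id {K : TwoCat} (M : MonadData K) : MndMor M M :=
  MkMndMor (id1 (mX M)) (id2 (mS M)).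
Definition mnd_comp {K : TwoCat} {M M' M'' : MonadData K}
    (v : MndMor M' M'') (u : MndMor M M') : MndMor M M'' :=
  MkMndMor (comp1 (mF v) (mF u)) (vcomp (wr (mphi v) (mF u)) (wl (mF v) (mphi u))).

Record RmdMor {K : TwoCat} (R R' : RelMonadData K) : Type := MkRmdMor {
  rF : hom (rX R) (rX R'); rF0 : hom (rX0 R) (rX0 R'); rphi : cell (rX0 R) (rX R') }.
Arguments rF {K R R'} _. Arguments rF0 {K R R'} _. Arguments rphi {K R R'} _.
Arguments MkRmdMor {K R R'} _ _ _.

Record is_rmd_mor {K : TwoCat} {R R' : RelMonadData K} (u : RmdMor R R') : Prop := {
  rF_I : comp1 (rF u) (rI R) = comp1 (rI R') (rF0 u);
  rphi_dom : dom2 (rphi u) = comp1 (rF u) (rS R);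
  rphi_cod : cod2 (rphi u) = comp1 (rS R') (rF0 u);
  rphi_unit : vcomp (rphi u) (wl (rF u) (rs R)) = wr (rs R') (rF0 u);
  rphi_ext : forall O (A B : hom O (rX0 R)) k hk1 hk2 h1 h2,
      vcomp (wr (rphi u) B) (wl (rF u) (rext R O A B k hk1 hk2))
      = vcomp (rext R' O (comp1 (rF0 u) A) (comp1 (rF0 u) B)
                  (vcomp (wr (rphi u) B) (wl (rF u) k)) h1 h2)
              (wr (rphi u) A) }.

Record RmdTr {K : TwoCat} (R R' : RelMonadData K) : Type := MkRmdTr {
  rp : cell (rX R) (rX R'); rp0 : cell (rX0 R) (rX0 R') }.
Arguments rp {K R R'} _. Arguments rp0 {K R R'} _.
Arguments MkRmdTr {K R R'} _ _.

Record is_rmd_tr {K : TwoCat} {R R' : RelMonadData K} (u v : RmdMor R R')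
    (c : RmdTr R R') : Prop := {
  rp_dom : dom2 (rp c) = rF u;
  rp_cod : cod2 (rp c) = rF v;
  rp0_dom : dom2 (rp0 c) = rF0 u;
  rp0_cod : cod2 (rp0 c) = rF0 v;
  rp_I : wl (rI R') (rp0 c) = wr (rp c) (rI R);
  rp_phi : vcomp (rphi v) (wr (rp c) (rS R)) = vcomp (wl (rS R') (rp0 c)) (rphi u) }.

Definition rmd_id {K : TwoCat} (R : RelMonadData K) : RmdMor R R :=
  MkRmdMor (id1 (rX R)) (id1 (rX0 R)) (id2 (rS R)).
Definition rmd_comp {K : TwoCat} {R R' R'' : RelMonadData K}
    (v : RmdMor R' R'') (u : RmdMor R R') : RmdMor R R'' :=
  MkRmdMor (comp1 (rF v) (rF u)) (comp1 (rF0 v) (rF0 u))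
           (vcomp (wr (rphi v) (rF0 u)) (wl (rF v) (rphi u))).
Definition rmd_tr_id {K : TwoCat} {R R' : RelMonadData K} (u : RmdMor R R') : RmdTr R R' :=
  MkRmdTr (id2 (rF u)) (id2 (rF0 u)).
Definition rmd_vcomp {K : TwoCat} {R R' : RelMonadData K} (d c : RmdTr R R') : RmdTr R R' :=
  MkRmdTr (vcomp (rp d) (rp c)) (vcomp (rp0 d) (rp0 c)).
Definition rmd_hcomp {K : TwoCat} {R R' R'' : RelMonadData K}
    (d : RmdTr R' R'') (c : RmdTr R R') : RmdTr R R'' :=
  MkRmdTr (hcomp (rp d) (rp c)) (hcomp (rp0 d) (rp0 c)).

Definition J0 {K : TwoCat} (M : MonadData K) : RelMonadData K :=
  MkRelMonad K (mX M) (mX M) (id1 (mX M)) (mS M)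
    (fun O A B k _ _ => vcomp (wr (mm M) B) (wl (mS M) k))
    (ms M).
Definition J1 {K : TwoCat} {M M' : MonadData K} (u : MndMor M M') : RmdMor (J0 M) (J0 M') :=
  MkRmdMor (R:=J0 M) (R':=J0 M') (mF u) (mF u) (mphi u).
Definition J2 {K : TwoCat} {M M' : MonadData K} (p : cell (mX M) (mX M')) : RmdTr (J0 M) (J0 M') :=
  MkRmdTr (R:=J0 M) (R':=J0 M') p p.

(* After a small calculus of whiskering in a strict 2-category, we show
   (1) the Kleisli extension of a monad satisfies the relative monad laws,
       and monad morphisms/transformations satisfy the relative ones;
   (2) conversely, a relative monad on the identity root 1_X determines a
       monad, whose multiplication is the extension of 1_S, and whose Kleisli
       extension is the given extension operator; a relative monad morphism
       between images of monads is a monad morphism, since its compatibility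
       with extensions at k = 1_S is the multiplication axiom. *)

From Stdlib Require Import ProofIrrelevance FunctionalExtensionality.

Section WhiskerCalculus.
Context {K : TwoCat}.

Lemma dom2_wl {x y z : obj K} (F : hom y z) (a : cell x y) : dom2 (wl F a) = comp1 F (dom2 a).
Proof. unfold wl. rewrite dom2_hcomp, dom2_id2. reflexivity. Qed.
Lemma cod2_wl {x y z : obj K} (F : hom y z) (a : cell x y) : cod2 (wl F a) = comp1 F (cod2 a).
Proof. unfold wl. rewrite cod2_hcomp, cod2_id2. reflexivity. Qed.
Lemma dom2_wr {x y z : obj K} (a : cell y z) (P : hom x y) : dom2 (wr a P) = comp1 (dom2 a) P.
Proof. unfold wr. rewrite dom2_hcomp, dom2_id2. reflexivity. Qed.
Lemma cod2_wr {x y z : obj K} (a : cell y z) (P : hom x y) : cod2 (wr a P) = comp1 (cod2 a) P.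
Proof. unfold wr. rewrite cod2_hcomp, cod2_id2. reflexivity. Qed.
End WhiskerCalculus.

(* Discharges the typing side conditions (domain/codomain equations of
   composite 2-cells) that accompany every rewriting step below. *)
Ltac typecheck := repeat (first
  [ rewrite dom2_wl | rewrite cod2_wl | rewrite dom2_wr | rewrite cod2_wr
  | rewrite dom2_id2 | rewrite cod2_id2 | rewrite dom2_hcomp | rewrite cod2_hcomp
  | rewrite comp1_idl | rewrite comp1_idr | rewrite comp1_assoc
  | match goal with H : dom2 ?a = _ |- context [dom2 ?a] => rewrite H
                  | H : cod2 ?a = _ |- context [cod2 ?a] => rewrite H end
  | rewrite dom2_vcomp by typecheck | rewrite cod2_vcomp by typecheck ]); try reflexivity.

Section WhiskerAlgebra.
Context {K : TwoCat}.

Lemma wl_id2 {x y z : obj K} (F : hom y z) (G : hom x y) : wl F (id2 G) = id2 (comp1 F G).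
Proof. apply hcomp_id2. Qed.
Lemma wr_id2 {x y z : obj K} (G : hom y z) (P : hom x y) : wr (id2 G) P = id2 (comp1 G P).
Proof. apply hcomp_id2. Qed.
Lemma wl_id1 {x y : obj K} (a : cell x y) : wl (id1 y) a = a.
Proof. apply hcomp_idl. Qed.
Lemma wr_id1 {x y : obj K} (a : cell x y) : wr a (id1 x) = a.
Proof. apply hcomp_idr. Qed.

Lemma vcomp_idl_at {x y : obj K} (a : cell x y) F : cod2 a = F -> vcomp (id2 F) a = a.
Proof. intros <-. apply vcomp_idl. Qed.
Lemma vcomp_idr_at {x y : obj K} (a : cell x y) F : dom2 a = F -> vcomp a (id2 F) = a.
Proof. intros <-. apply vcomp_idr. Qed.

Lemma wl_vcomp {x y z : obj K} (F : hom y z) (a b : cell x y) :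
  cod2 a = dom2 b -> wl F (vcomp b a) = vcomp (wl F b) (wl F a).
Proof.
  intros Hab. unfold wl. rewrite <- interchange by typecheck.
  rewrite vcomp_idl_at by typecheck. reflexivity.
Qed.
Lemma wr_vcomp {x y z : obj K} (P : hom x y) (a b : cell y z) :
  cod2 a = dom2 b -> wr (vcomp b a) P = vcomp (wr b P) (wr a P).
Proof.
  intros Hab. unfold wr. rewrite <- interchange by typecheck.
  rewrite vcomp_idl_at by typecheck. reflexivity.
Qed.

Lemma wl_wl {x y z w : obj K} (F : hom z w) (G : hom y z) (a : cell x y) :
  wl F (wl G a) = wl (comp1 F G) a.
Proof. unfold wl. rewrite hcomp_assoc, hcomp_id2. reflexivity. Qed.
Lemma wr_wr {x y z w : obj K} (a : cell z w) (P : hom y z) (Q : hom x y) :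
  wr (wr a P) Q = wr a (comp1 P Q).
Proof. unfold wr. rewrite <- hcomp_assoc, hcomp_id2. reflexivity. Qed.
Lemma wl_wr {x y z w : obj K} (F : hom z w) (a : cell y z) (P : hom x y) :
  wl F (wr a P) = wr (wl F a) P.
Proof. unfold wl, wr. apply hcomp_assoc. Qed.

Lemma whisker_exchange {x y z : obj K} (a : cell x y) (b : cell y z) F F' G G' :
  dom2 a = F -> cod2 a = F' -> dom2 b = G -> cod2 b = G' ->
  vcomp (wr b F') (wl G a) = vcomp (wl G' a) (wr b F).
Proof.
  intros <- <- <- <-. unfold wl, wr.
  rewrite <- !interchange by typecheck.
  rewrite vcomp_idl, vcomp_idr, (vcomp_idl _ _ _ b), (vcomp_idr _ _ _ a). reflexivity.
Qed.
End WhiskerAlgebra.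

Definition kleisli_ext {K : TwoCat} {X O : obj K} (S : hom X X) (m : cell X X)
    (B : hom O X) (k : cell O X) : cell O X :=
  vcomp (wr m B) (wl S k).

Section KleisliExtension.
Context {K : TwoCat} {X : obj K} (S : hom X X) (m s : cell X X).
Hypotheses (m_dom : dom2 m = comp1 S S) (m_cod : cod2 m = S)
  (s_dom : dom2 s = id1 X) (s_cod : cod2 s = S)
  (m_assoc : vcomp m (wl S m) = vcomp m (wr m S))
  (m_unitl : vcomp m (wr s S) = id2 S) (m_unitr : vcomp m (wl S s) = id2 S).

Let ext {O : obj K} := @kleisli_ext K X O S m.

Lemma kleisli_ext_dom {O} (A B : hom O X) k :
  dom2 k = A -> cod2 k = comp1 S B -> dom2 (ext B k) = comp1 S A.
Proof. intros. unfold ext, kleisli_ext. typecheck. Qed.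

Lemma kleisli_ext_cod {O} (B : hom O X) k :
  cod2 k = comp1 S B -> cod2 (ext B k) = comp1 S B.
Proof. intros. unfold ext, kleisli_ext. typecheck. Qed.

Lemma kleisli_ext_natP {O O'} (P : hom O' O) (B : hom O X) k :
  cod2 k = comp1 S B -> ext (comp1 B P) (wr k P) = wr (ext B k) P.
Proof.
  intros. unfold ext, kleisli_ext.
  rewrite wr_vcomp, wr_wr, wl_wr by typecheck. reflexivity.
Qed.

Lemma kleisli_ext_natA {O} (B : hom O X) k (al : cell O X) :
  cod2 al = dom2 k -> cod2 k = comp1 S B ->
  ext B (vcomp k al) = vcomp (ext B k) (wl S al).
Proof.
  intros. unfold ext, kleisli_ext.
  rewrite wl_vcomp, vcomp_assoc by typecheck. reflexivity.
Qed.

Lemma kleisli_ext_natB {O} (B B' : hom O X) k (be : cell O X) :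
  dom2 be = B -> cod2 be = B' -> cod2 k = comp1 S B ->
  ext B' (vcomp (wl S be) k) = vcomp (wl S be) (ext B k).
Proof.
  intros. unfold ext, kleisli_ext.
  rewrite wl_vcomp, wl_wl, vcomp_assoc by typecheck.
  rewrite (whisker_exchange be m B B' (comp1 S S) S) by typecheck.
  rewrite vcomp_assoc by typecheck. reflexivity.
Qed.

Lemma kleisli_ext_unitl {O} (A B : hom O X) k :
  dom2 k = A -> cod2 k = comp1 S B -> vcomp (ext B k) (wr s A) = k.
Proof.
  intros. unfold ext, kleisli_ext.
  rewrite <- vcomp_assoc by typecheck.
  rewrite <- (whisker_exchange k s A (comp1 S B) (id1 X) S), wl_id1 by typecheck.
  rewrite vcomp_assoc, <- wr_wr, <- wr_vcomp, m_unitl, wr_id2 by typecheck.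
  apply vcomp_idl_at. assumption.
Qed.

Lemma kleisli_ext_unitr {O} (A : hom O X) : ext A (wr s A) = id2 (comp1 S A).
Proof.
  unfold ext, kleisli_ext.
  rewrite wl_wr, <- wr_vcomp, m_unitr, wr_id2 by typecheck. reflexivity.
Qed.

Lemma kleisli_ext_assoc {O} (A B C : hom O X) k l :
  dom2 k = A -> cod2 k = comp1 S B -> dom2 l = B -> cod2 l = comp1 S C ->
  ext C (vcomp (ext C l) k) = vcomp (ext C l) (ext B k).
Proof.
  intros. unfold ext, kleisli_ext.
  rewrite !wl_vcomp, wl_wl by typecheck.
  (* Bring S(m C) next to m C and use associativity of m; then slide l past m. *)
  rewrite (vcomp_assoc _ _ _ (wl S k) (vcomp (wl S (wr m C)) (wl (comp1 S S) l)) (wr m C))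
    by typecheck.
  rewrite (vcomp_assoc _ _ _ (wl (comp1 S S) l) (wl S (wr m C)) (wr m C)) by typecheck.
  rewrite wl_wr, <- wr_vcomp, m_assoc, wr_vcomp, wr_wr by typecheck.
  rewrite <- (vcomp_assoc _ _ _ (wl (comp1 S S) l) (wr m (comp1 S C)) (wr m C)) by typecheck.
  rewrite (whisker_exchange l m B (comp1 S C) (comp1 S S) S) by typecheck.
  rewrite !vcomp_assoc by typecheck. reflexivity.
Qed.
End KleisliExtension.

Lemma kleisli_ext_id2 {K : TwoCat} {X : obj K} (S : hom X X) (m : cell X X) :
  dom2 m = comp1 S S -> kleisli_ext S m (id1 X) (id2 S) = m.
Proof.
  intros. unfold kleisli_ext. rewrite wr_id1, wl_id2. apply vcomp_idr_at. assumption.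
Qed.

Lemma monad_is_relmonad {K : TwoCat} (M : MonadData K) : is_monad M -> is_relmonad (J0 M).
Proof.
  destruct M as [X S m s]; intros [m_dom m_cod s_dom s_cod m_assoc m_unitl m_unitr].
  cbn in *. constructor; cbn; intros *; rewrite ?comp1_idl; intros.
  - exact s_dom.
  - exact s_cod.
  - eapply kleisli_ext_dom; eassumption.
  - eapply kleisli_ext_cod; eassumption.
  - eapply kleisli_ext_natP; eassumption.
  - rewrite wl_id1. eapply kleisli_ext_natA; try eassumption; congruence.
  - eapply kleisli_ext_natB; eassumption.
  - eapply kleisli_ext_unitl; eassumption.
  - eapply kleisli_ext_unitr; eassumption.
  - eapply kleisli_ext_assoc; eassumption.
Qed.

(* A monad morphism (F, phi) transports Kleisli extensions: the
   multiplication axiom for phi, whiskered by the extended 2-cell. *)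
Section MonadMorphisms.
Context {K : TwoCat} {X X' : obj K} (S : hom X X) (m : cell X X)
  (S' : hom X' X') (m' : cell X' X') (F : hom X X') (phi : cell X X').
Hypotheses (m_dom : dom2 m = comp1 S S) (m_cod : cod2 m = S)
  (m'_dom : dom2 m' = comp1 S' S')
  (phi_dom : dom2 phi = comp1 F S) (phi_cod : cod2 phi = comp1 S' F)
  (phi_mult : vcomp phi (wl F m) = vcomp (wr m' F) (vcomp (wl S' phi) (wr phi S))).

Lemma mnd_mor_preserves_kleisli_ext {O} (A B : hom O X) (k : cell O X) :
  dom2 k = A -> cod2 k = comp1 S B ->
  vcomp (wr phi B) (wl F (kleisli_ext S m B k))
  = vcomp (kleisli_ext S' m' (comp1 F B) (vcomp (wr phi B) (wl F k))) (wr phi A).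
Proof.
  intros. unfold kleisli_ext.
  rewrite wl_vcomp, (vcomp_assoc _ _ _ (wl F (wl S k)) (wl F (wr m B)) (wr phi B))
    by typecheck.
  rewrite wl_wr, <- wr_vcomp, phi_mult, !wr_vcomp by typecheck.
  rewrite wl_vcomp, wl_wl, !wr_wr, wl_wr, wl_wl by typecheck.
  rewrite <- !vcomp_assoc by typecheck.
  rewrite (whisker_exchange k phi A (comp1 S B) (comp1 F S) (comp1 S' F)) by typecheck.
  reflexivity.
Qed.
End MonadMorphisms.

Lemma mnd_mor_is_rmd_mor {K : TwoCat} (M M' : MonadData K) (u : MndMor M M') :
  is_monad M -> is_monad M' -> is_mnd_mor u -> is_rmd_mor (J1 u).
Proof.
  destruct M as [X S m s], M' as [X' S' m' s'], u as [F phi].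
  intros [m_dom m_cod] [m'_dom m'_cod] [phi_dom phi_cod phi_unit phi_mult]; cbn in *.
  constructor; cbn; intros *.
  - rewrite comp1_idl, comp1_idr. reflexivity.
  - exact phi_dom.
  - exact phi_cod.
  - exact phi_unit.
  - rewrite comp1_idl. intros. eapply mnd_mor_preserves_kleisli_ext; eassumption.
Qed.

(* J is well defined on 2-cells: p0 = p, so the compatibility with I = 1 is trivial. *)
Lemma mnd_tr_is_rmd_tr {K : TwoCat} (M M' : MonadData K) (u v : MndMor M M')
    (p : cell (mX M) (mX M')) :
  is_mnd_tr u v p -> is_rmd_tr (J1 u) (J1 v) (J2 (M:=M) (M':=M') p).
Proof.
  intros (p_dom & p_cod & p_phi). constructor; cbn; try assumption.
  rewrite wl_id1, wr_id1. reflexivity.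
Qed.

Lemma ext_cong {K : TwoCat} {X0 X : obj K} {I S : hom X0 X} (ext : ext_type I S)
    O (A A' B B' : hom O X0) k k' h1 h2 h1' h2' :
  A = A' -> B = B' -> k = k' -> ext O A B k h1 h2 = ext O A' B' k' h1' h2'.
Proof. intros; subst; f_equal; apply proof_irrelevance. Qed.

Lemma id2_dom_left_unit {K : TwoCat} {X : obj K} (S : hom X X) :
  dom2 (id2 S) = comp1 (id1 X) S.
Proof. typecheck. Qed.
Lemma id2_cod_right_unit {K : TwoCat} {X : obj K} (S : hom X X) :
  cod2 (id2 S) = comp1 S (id1 X).
Proof. typecheck. Qed.

Definition rel_mult {K : TwoCat} {X : obj K} (S : hom X X) (ext : ext_type (id1 X) S)
  : cell X X :=
  ext X S (id1 X) (id2 S) (id2_dom_left_unit S) (id2_cod_right_unit S).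

Section RelMonadOnIdentity.
Context {K : TwoCat} {X : obj K} (S : hom X X) (ext : ext_type (id1 X) S) (s : cell X X).
Hypothesis HR : is_relmonad (MkRelMonad K X X (id1 X) S ext s).

Lemma rel_mult_dom : dom2 (rel_mult S ext) = comp1 S S.
Proof. exact (rext_dom _ HR X S (id1 X) _ _ _). Qed.
Lemma rel_mult_cod : cod2 (rel_mult S ext) = S.
Proof. unfold rel_mult. rewrite (rext_cod _ HR). apply comp1_idr. Qed.

(* The extension operator is the Kleisli extension of [rel_mult]:
   k^dagger = (1_{SB})^dagger . S k by naturality in A, and
   (1_{SB})^dagger = (1_S)^dagger B by naturality in the span. *)
Lemma rel_ext_is_kleisli O (A B : hom O X) k h1 h2 :
  ext O A B k h1 h2 = kleisli_ext S (rel_mult S ext) B k.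
Proof.
  assert (k_dom : dom2 k = A) by (rewrite h1; apply comp1_idl).
  unfold kleisli_ext.
  unshelve epose proof (rext_natA _ HR O (comp1 S B) A B (id2 (comp1 S B)) k
                          _ _ k_dom h2 _ _) as natA; cbn in *; [typecheck .. |].
  etransitivity.
  { etransitivity; [| exact natA].
    apply ext_cong; [reflexivity | reflexivity |].
    rewrite wl_id1, vcomp_idl_at by typecheck. reflexivity. }
  f_equal.
  unshelve epose proof (rext_natP _ HR X O B S (id1 X) (id2 S)
                          (id2_dom_left_unit S) (id2_cod_right_unit S) _ _) as natP;
    cbn in *; [typecheck .. |].
  fold (rel_mult S ext) in natP. rewrite <- natP.
  apply ext_cong; [reflexivity | symmetry; apply comp1_idl | symmetry; apply wr_id2].
Qed.

Lemma rel_kleisli_unitr O (A : hom O X) :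
  kleisli_ext S (rel_mult S ext) A (wr s A) = id2 (comp1 S A).
Proof.
  pose proof (rs_dom _ HR) as s_dom; pose proof (rs_cod _ HR) as s_cod; cbn in *.
  assert (h1 : dom2 (wr s A) = comp1 (id1 X) A) by typecheck.
  assert (h2 : cod2 (wr s A) = comp1 S A) by typecheck.
  rewrite <- (rel_ext_is_kleisli O A A _ h1 h2).
  exact (rlaw_unitr _ HR O A h1 h2).
Qed.

Lemma rel_kleisli_assoc O (A B C : hom O X) k l :
  dom2 k = A -> cod2 k = comp1 S B -> dom2 l = B -> cod2 l = comp1 S C ->
  kleisli_ext S (rel_mult S ext) C (vcomp (kleisli_ext S (rel_mult S ext) C l) k)
  = vcomp (kleisli_ext S (rel_mult S ext) C l) (kleisli_ext S (rel_mult S ext) B k).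
Proof.
  intros k_dom k_cod l_dom l_cod.
  assert (hk1 : dom2 k = comp1 (id1 X) A) by typecheck.
  assert (hl1 : dom2 l = comp1 (id1 X) B) by typecheck.
  rewrite <- (rel_ext_is_kleisli O B C l hl1 l_cod),
          <- (rel_ext_is_kleisli O A B k hk1 k_cod).
  pose proof (rext_dom _ HR O B C l hl1 l_cod) as lext_dom.
  pose proof (rext_cod _ HR O B C l hl1 l_cod) as lext_cod; cbn in *.
  assert (h1 : dom2 (vcomp (ext O B C l hl1 l_cod) k) = comp1 (id1 X) A) by typecheck.
  assert (h2 : cod2 (vcomp (ext O B C l hl1 l_cod) k) = comp1 S C) by typecheck.
  rewrite <- (rel_ext_is_kleisli O A C _ h1 h2).
  exact (rlaw_assoc _ HR O A B C k l hk1 k_cod hl1 l_cod h1 h2).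
Qed.

(* The monad laws are the Kleisli laws at the identity spans; associativity
   is the associativity law for k = 1_{SS} and l = 1_S. *)
Lemma rel_mult_monad : is_monad (MkMonad K X S (rel_mult S ext) s).
Proof.
  pose proof rel_mult_dom as m_dom; pose proof rel_mult_cod as m_cod.
  pose proof (rs_dom _ HR) as s_dom; pose proof (rs_cod _ HR) as s_cod; cbn in *.
  constructor; cbn; try assumption.
  - pose proof (rel_kleisli_assoc X (comp1 S S) S (id1 X) (id2 (comp1 S S)) (id2 S))
      as assoc.
    rewrite kleisli_ext_id2, vcomp_idr_at in assoc by typecheck.
    unfold kleisli_ext in assoc. rewrite wl_id2, wr_id1, vcomp_idr_at in assoc
      by typecheck.
    apply assoc; typecheck.
  - exact (rlaw_unitl _ HR X S (id1 X) (id2 S) _ _).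
  - pose proof (rel_kleisli_unitr X (id1 X)) as unitr.
    unfold kleisli_ext in unitr. rewrite !wr_id1, comp1_idr in unitr. exact unitr.
Qed.

Lemma rel_mult_monad_J0 :
  J0 (MkMonad K X S (rel_mult S ext) s) = MkRelMonad K X X (id1 X) S ext s.
Proof.
  unfold J0; cbn. f_equal.
  repeat (apply functional_extensionality_dep; intro).
  symmetry. apply rel_ext_is_kleisli.
Qed.
End RelMonadOnIdentity.

(* A monad is determined by its Kleisli extension: [m] is the extension of [1_S]. *)
Lemma J0_injective {K : TwoCat} (M M' : MonadData K) :
  is_monad M -> is_monad M' -> J0 M = J0 M' -> M = M'.
Proof.
  destruct M as [X S m s], M' as [X' S' m' s'].
  intros [m_dom] [m'_dom] E; cbn in *.
  assert (X = X') as <- by exact (f_equal rX0 E).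
  injection E as _ Eext Es.
  repeat match goal with H : existT _ _ _ = existT _ _ _ |- _ => apply inj_pair2 in H end.
  assert (S = S') as <- by exact (f_equal (@projT1 _ _) Eext).
  apply inj_pair2 in Eext.
  apply (f_equal (fun ext : ext_type (id1 X) S =>
                    ext X S (id1 X) (id2 S) (id2_dom_left_unit S) (id2_cod_right_unit S)))
    in Eext.
  change (kleisli_ext S m (id1 X) (id2 S) = kleisli_ext S m' (id1 X) (id2 S)) in Eext.
  rewrite !kleisli_ext_id2 in Eext by assumption.
  subst. reflexivity.
Qed.

(* Relative monad morphisms between monads are exactly monad morphisms: the
   compatibility with extensions at [k = 1_S] is the multiplication axiom. *)
Lemma rmd_mor_is_mnd_mor {K : TwoCat} (M M' : MonadData K) (u : MndMor M M') :
  is_monad M -> is_monad M' -> is_rmd_mor (J1 u) -> is_mnd_mor u.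
Proof.
  destruct M as [X S m s], M' as [X' S' m' s'], u as [F phi].
  intros [m_dom m_cod] [m'_dom m'_cod] [_ phi_dom phi_cod phi_unit phi_ext]; cbn in *.
  constructor; cbn; try assumption.
  specialize (phi_ext X S (id1 X) (id2 S) (id2_dom_left_unit S) (id2_cod_right_unit S)).
  unshelve epose proof (phi_ext _ _) as mult; [typecheck .. |].
  change (vcomp (wr phi (id1 X)) (wl F (kleisli_ext S m (id1 X) (id2 S)))
          = vcomp (kleisli_ext S' m' (comp1 F (id1 X)) (vcomp (wr phi (id1 X)) (wl F (id2 S))))
                  (wr phi S)) in mult.
  rewrite kleisli_ext_id2, !wr_id1, wl_id2, comp1_idr, vcomp_idr_at in mult by typecheck.
  rewrite mult. unfold kleisli_ext. apply eq_sym, vcomp_assoc; typecheck.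
Qed.

(* J is bijective on 1-cells: the root component F0 of a relative monad
   morphism between images of monads is forced to equal F. *)
Lemma J1_bijective {K : TwoCat} (M M' : MonadData K) :
  is_monad M -> is_monad M' ->
  forall v : RmdMor (J0 M) (J0 M'), is_rmd_mor v ->
    exists! u : MndMor M M', is_mnd_mor u /\ J1 u = v.
Proof.
  intros HM HM' [F F0 phi] Hv.
  assert (F0_F : F0 = F).
  { pose proof (rF_I _ Hv) as FI; cbn in FI. rewrite comp1_idl, comp1_idr in FI.
    symmetry. exact FI. }
  subst F0. exists (MkMndMor F phi). split.
  - split; [apply rmd_mor_is_mnd_mor; assumption | reflexivity].
  - intros [F' phi'] [_ E]. injection E as E_F _ E_phi. subst. reflexivity.
Qed.

(* J is bijective on 2-cells: the root component p0 equals p, and the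
   remaining conditions are those of a monad transformation. *)
Lemma J2_bijective {K : TwoCat} (M M' : MonadData K) (u v : MndMor M M') :
  forall c : RmdTr (J0 M) (J0 M'), is_rmd_tr (J1 u) (J1 v) c ->
    exists! p : cell (mX M) (mX M'), is_mnd_tr u v p /\ J2 p = c.
Proof.
  intros [p p0] [p_dom p_cod _ _ p_I p_phi]; cbn in *.
  rewrite wl_id1, wr_id1 in p_I. subst p0.
  exists p. split.
  - repeat split; assumption.
  - intros p' [_ E]. injection E as ->. reflexivity.
Qed.

Lemma J0_image {K : TwoCat} (R : RelMonadData K) : is_relmonad R ->
  (exists M : MonadData K, is_monad M /\ J0 M = R) <->
  exists e : rX0 R = rX R,
    eq_rect (rX0 R) (fun Y => hom Y (rX R)) (rI R) (rX R) e = id1 (rX R).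
Proof.
  intros HR. split.
  - intros [M [_ <-]]. exists eq_refl. reflexivity.
  - destruct R as [X0 X I S ext s]; cbn. intros [e I_id]. subst X0. cbn in I_id. subst I.
    exists (MkMonad K X S (rel_mult S ext) s).
    split; [apply rel_mult_monad | apply rel_mult_monad_J0]; assumption.
Qed.

Theorem mainTheorem6 (K : TwoCat) :
  (* J is well defined: objects, 1-cells and 2-cells go to relative monads,
     relative monad morphisms and relative monad transformations *)
  (forall M : MonadData K, is_monad M -> is_relmonad (J0 M)) /\
  (forall (M M' : MonadData K) (u : MndMor M M'),
      is_monad M -> is_monad M' -> is_mnd_mor u -> is_rmd_mor (J1 u)) /\
  (forall (M M' : MonadData K) (u v : MndMor M M') (p : cell (mX M) (mX M')),
      is_monad M -> is_monad M' -> is_mnd_mor u -> is_mnd_mor v ->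
      is_mnd_tr u v p -> is_rmd_tr (J1 u) (J1 v) (J2 (M:=M) (M':=M') p)) /\
  (* J is a 2-functor: it preserves identities and all compositions *)
  (forall M : MonadData K, J1 (mnd_id M) = rmd_id (J0 M)) /\
  (forall (M M' M'' : MonadData K) (u : MndMor M M') (v : MndMor M' M''),
      J1 (mnd_comp v u) = rmd_comp (J1 v) (J1 u)) /\
  (forall (M M' : MonadData K) (u : MndMor M M'),
      J2 (M:=M) (M':=M') (id2 (mF u)) = rmd_tr_id (J1 u)) /\
  (forall (M M' : MonadData K) (p q : cell (mX M) (mX M')),
      J2 (M:=M) (M':=M') (vcomp q p) = rmd_vcomp (J2 q) (J2 p)) /\
  (forall (M M' M'' : MonadData K) (p : cell (mX M) (mX M')) (q : cell (mX M') (mX M'')),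
      J2 (M:=M) (M':=M'') (hcomp q p) = rmd_hcomp (J2 (M:=M') (M':=M'') q) (J2 (M:=M) (M':=M') p)) /\
  (* injective on objects *)
  (forall M M' : MonadData K, is_monad M -> is_monad M' -> J0 M = J0 M' -> M = M') /\
  (* image on objects: exactly the relative monads with X0 = X and I = 1_X *)
  (forall R : RelMonadData K, is_relmonad R ->
      ((exists M : MonadData K, is_monad M /\ J0 M = R) <->
       exists e : rX0 R = rX R,
         eq_rect (rX0 R) (fun Y => hom Y (rX R)) (rI R) (rX R) e = id1 (rX R))) /\
  (* isomorphism on hom-categories: bijective on 1-cells ... *)
  (forall M M' : MonadData K, is_monad M -> is_monad M' ->
      forall v : RmdMor (J0 M) (J0 M'), is_rmd_mor v ->
        exists! u : MndMor M M', is_mnd_mor u /\ J1 u = v) /\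
  (* ... and bijective on 2-cells between any two 1-cells *)
  (forall (M M' : MonadData K) (u v : MndMor M M'),
      is_monad M -> is_monad M' -> is_mnd_mor u -> is_mnd_mor v ->
      forall c : RmdTr (J0 M) (J0 M'), is_rmd_tr (J1 u) (J1 v) c ->
        exists! p : cell (mX M) (mX M'), is_mnd_tr u v p /\ J2 p = c).
Proof.
  split; [exact monad_is_relmonad |].
  split; [exact mnd_mor_is_rmd_mor |].
  split; [intros; apply mnd_tr_is_rmd_tr; assumption |].
  do 5 (split; [reflexivity |]).
  split; [exact J0_injective |].
  split; [exact J0_image |].
  split; [exact J1_bijective |].
  intros M M' u v _ _ _ _. apply J2_bijective.
Qed.
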